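(* Let $\Sigma_\infty$, $\succeq^*$ and $\{\succeq^k\}$ be as in the following setting: $\Sigma_\infty$ is the sequence of experiments whose existence is asserted in the preference-recovery theorem (so that any continuous weakly monotone preferences $\succeq^k$ strongly rationalizing $(\Sigma_k,c_{\succeq^*})$, for a continuous weakly monotone $\succeq^*$, satisfy $\succeq^k\to\succeq^*$ in closed convergence); $\succeq^*$ is a continuous weakly monotone preference on $X$; and each $\succeq^k$ is a continuous weakly monotone preference strongly rationalizing $(\Sigma_k,c_{\succeq^*})$. If in addition $\succeq^*$ and each $\succeq^k$ are standard, with standard representations $(V,u)$ and $(V^k,u^k)$ respectively, then $(V^k,u^k)\to(V,u)$ as $k\to\infty$ in the compact-open topology (i.e. uniformly on compact sets).
   Context: $S$ is a finite nonempty set, $a<b$ reals, $\Delta([a,b])$ the Borel probability measures on $[a,b]$ with the weak topology, $X=\Delta([a,b])^S$ with the product topology. First-order stochastic dominance $p\ge q$: $\int h\,dp\ge\int h\,dq$ for all bounded continuous nondecreasing $h$; for acts $f\ge g$ iff $f(s)\ge g(s)$ for all $s$. A preference is a complete, transitive relation closed in $X\times X$; weakly monotone if $f\ge g\Rightarrow f\succeq g$. Let $\mathcal U$ be the set of continuous nondecreasing $u:[a,b]\to\mathbf{R}$ with $u(a)=0,u(b)=1$. $(V,u)$ is a standard representation if $V:X\to\mathbf{R}$ is continuous, $u\in\mathcal U$, and $V(p,\dots,p)=\int u\,dp$ for all $p$; a preference is standard if weakly monotone and represented by $V$ for some standard representation $(V,u)$. A sequence of experiments is a sequence $\{B_i\}$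 of unordered pairs in $X$, $\Sigma_k=\{B_1,\dots,B_k\}$, $B=\bigcup_iB_i$ dense in $X$, every pair from $B$ appearing as some $B_k$. $c_\succeq(A)=\{x\in A:x\succeq y\ \forall y\in A\}$; $\succeq^k$ strongly rationalizes $(\Sigma_k,c)$ if $c(B_i)=c_{\succeq^k}(B_i)$ for all $B_i\in\Sigma_k$. Closed convergence of closed sets $F^n\to F$ in $X\times X$ means $\mathrm{Li}=F=\mathrm{Ls}$, where $\mathrm{Li}$ ($\mathrm{Ls}$) is the set of points every neighborhood of which meets $F^n$ for all large $n$ (infinitely many $n$). *)

From HB Require Import structures.
From mathcomp Require Import all_boot all_order all_algebra.
From mathcomp Require Import all_classical all_reals all_analysis.
Set Implicit Arguments. Unset Strict Implicit. Unset Printing Implicit Defensive.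
Import Order.TTheory GRing.Theory Num.Theory numFieldTopology.Exports numFieldNormedType.Exports.
Local Open Scope classical_set_scope.
Local Open Scope ring_scope.

Section Defs.
Variable R : realType.
Variables a b : R.

Definition Iab : set R := [set` `[a, b]].

Definition integ (P : probability R R) (h : R -> R) : R :=
  fine (\int[P]_(x in Iab) (h x)%:E).

(** bounded continuous test functions on [a,b] (continuity on the compact
    [a,b] implies boundedness) *)
Definition CB := {h : R -> R | {within Iab, continuous h}}.

(** Delta([a,b]) : Borel probability measures on R concentrated on [a,b],
    i.e. Borel probability measures on [a,b] *)
Definition lott := {P : probability R R | P Iab = 1%E}.
HB.instance Definition _ := gen_eqMixin lott.
HB.instance Definition _ := gen_choiceMixin lott.

Definition evl (P : lott) : {ptws CB -> R} := fun h => integ (sval P) (sval h).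

(** Delta([a,b]) with the weak topology: the coarsest topology making
    P |-> \int h dP continuous for every bounded continuous h *)
Definition Lott := initial_topology evl.

Variable S : finType.
Definition Act := {ptws S -> Lott}.

Definition const_act (p : Lott) : Act := fun _ => p.

Definition fosd (p q : Lott) : Prop :=
  forall h : R -> R, {within Iab, continuous h} ->
    {in Iab &, {homo h : x y / x <= y}} ->
    integ (sval q) h <= integ (sval p) h.

Definition act_ge (f g : Act) : Prop := forall s, fosd (f s) (g s).

Definition graph (pr : Act -> Act -> Prop) : set (Act * Act) :=
  [set fg | pr fg.1 fg.2].

Definition is_preference (pr : Act -> Act -> Prop) : Prop :=
  (forall f g, pr f g \/ pr g f) /\
  (forall f g h, pr f g -> pr g h -> pr f h) /\
  closed (graph pr).

Definition weakly_monotone (pr : Act -> Act -> Prop) : Prop :=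
  forall f g, act_ge f g -> pr f g.

Definition in_U (u : R -> R) : Prop :=
  {within Iab, continuous u} /\ {in Iab &, {homo u : x y / x <= y}} /\
  u a = 0 /\ u b = 1.

Definition standard_rep (V : Act -> R) (u : R -> R) : Prop :=
  continuous V /\ in_U u /\ forall p : Lott, V (const_act p) = integ (sval p) u.

Definition represents (pr : Act -> Act -> Prop) (V : Act -> R) : Prop :=
  forall f g, pr f g <-> V g <= V f.

Definition cset (pr : Act -> Act -> Prop) (A : set Act) : set Act :=
  [set x | A x /\ forall y, A y -> pr x y].

Definition pairset (B : Act * Act) : set Act := [set B.1] `|` [set B.2].

(** a sequence of experiments B_1, B_2, ... (here indexed from 0) *)
Definition Bunion (B : nat -> Act * Act) : set Act :=
  \bigcup_i pairset (B i).

Definition seq_experiments (B : nat -> Act * Act) : Prop :=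
  (forall i, (B i).1 <> (B i).2) /\
  closure (Bunion B) = setT /\
  (forall x y, Bunion B x -> Bunion B y -> x <> y ->
     exists k, pairset (B k) = [set x] `|` [set y]).

(** pr strongly rationalizes (Sigma, c) where Sigma = {B i | i <= k} *)
Definition strongly_rationalizes (pr : Act -> Act -> Prop) (B : nat -> Act * Act)
  (k : nat) (c : set Act -> set Act) : Prop :=
  forall i, (i <= k)%N -> c (pairset (B i)) = cset pr (pairset (B i)).

Definition Li (F : nat -> set (Act * Act)) : set (Act * Act) :=
  [set z | forall U, nbhs z U -> \forall n \near \oo, (F n `&` U) !=set0].
Definition Ls (F : nat -> set (Act * Act)) : set (Act * Act) :=
  [set z | forall U, nbhs z U ->
     forall N, exists2 n, (N <= n)%N & (F n `&` U) !=set0].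
Definition closed_cvg (F : nat -> set (Act * Act)) (G : set (Act * Act)) : Prop :=
  Li F = G /\ Ls F = G.

(** the recovery property of the preference-recovery theorem *)
Definition recovers (B : nat -> Act * Act) : Prop :=
  forall pstar : Act -> Act -> Prop,
    is_preference pstar -> weakly_monotone pstar ->
  forall prefs : nat -> Act -> Act -> Prop,
    (forall k, is_preference (prefs k) /\ weakly_monotone (prefs k) /\
       strongly_rationalizes (prefs k) B k (cset pstar)) ->
    closed_cvg (fun k => graph (prefs k)) (graph pstar).

End Defs.

From HB Require Import structures.
From mathcomp Require Import all_boot all_order all_algebra.
From mathcomp Require Import all_classical all_reals all_analysis.
From mathcomp Require Import measurable_realfun lra.
Set Implicit Arguments. Unset Strict Implicit. Unset Printing Implicit Defensive.
Import Order.TTheory GRing.Theory Num.Theory numFieldTopology.Exports numFieldNormedType.Exports.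
Local Open Scope classical_set_scope.
Local Open Scope ring_scope.

(* A standard representation satisfies V (const_act delta_x) = u x, and the mixture
   t b + (1 - t) a has utility t under every standard representation, so constant acts
   realise every utility level in [0, 1] simultaneously for V and all V^k.  If
   V p < V q, then (p, q) lies outside the graph of pstar, hence outside the upper closed
   limit of the graphs of the prefs k: on a neighbourhood of (p, q) eventually
   V^k p' < V^k q'.  Comparing an act x with the mixtures of utility V x +- eps pins
   V^k within eps of V near x for large k; compactness makes this uniform on compact
   sets, and since x |-> delta_x is continuous, [a, b] is mapped onto a compact set of
   acts on which V^k and V restrict to u^k and u. *)

Section Integrals.
Variables (R : realType) (a b : R).

Lemma measurable_Iab : measurable (Iab a b).
Proof. exact: measurable_itv. Qed.

Lemma within_continuous_measurable (h : R -> R) :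
  {within Iab a b, continuous h} -> measurable_fun (Iab a b) (EFin \o h).
Proof.
move=> hc; apply/measurable_EFinP.
exact: subspace_continuous_measurable_fun measurable_Iab hc.
Qed.

Lemma within_continuous_integrable (P : probability R R) (h : R -> R) :
  {within Iab a b, continuous h} -> P.-integrable (Iab a b) (fun x => (h x)%:E).
Proof.
move=> hc; apply: measurable_bounded_integrable.
- exact: measurable_Iab.
- by rewrite (le_lt_trans (probability_le1 P measurable_Iab)) ?ltry.
- exact: subspace_continuous_measurable_fun measurable_Iab hc.
- have /compact_bounded[M [_ hM]] := continuous_compact hc (@segment_compact _ a b).
  by exists M; split; rewrite ?num_real // => ? ? ? ?; exact: hM.
Qed.

Lemma le_integ (P : probability R R) (h g : R -> R) :
  {within Iab a b, continuous h} -> {within Iab a b, continuous g} ->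
  (forall x, Iab a b x -> h x <= g x) -> integ a b P h <= integ a b P g.
Proof.
move=> hc gc hg; have ih := within_continuous_integrable P hc.
have ig := within_continuous_integrable P gc.
rewrite /integ; apply: fine_le.
- by have := integrable_fin_num measurable_Iab ih.
- by have := integrable_fin_num measurable_Iab ig.
apply: le_integral => //; first exact: measurable_Iab.
by move=> x /[!inE] Ix /=; rewrite lee_fin hg.
Qed.

Lemma integ_cst (P : probability R R) (c : R) :
  P (Iab a b) = 1%E -> integ a b P (cst c) = c.
Proof.
move=> P1; rewrite /integ -[X in fine X]/(\int[P]_(x in Iab a b) (cst c%:E) x)%E.
rewrite (integral_cst P measurable_Iab).
by transitivity (fine (c%:E * 1)%E); [congr (fine (_ * _)); exact: P1|rewrite mule1].
Qed.

End Integrals.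

Section Clamp.
Variable R : realFieldType.

Definition clamp (lo hi x : R) : R := Num.min (Num.max x lo) hi.

Lemma clamp_itv (lo hi x : R) : lo <= hi -> lo <= clamp lo hi x <= hi.
Proof. by move=> lohi; rewrite /clamp le_min ge_min le_max !lexx lohi !orbT. Qed.

Lemma clamp_id (lo hi x : R) : lo <= x <= hi -> clamp lo hi x = x.
Proof. by move=> /andP[lox xhi]; rewrite /clamp (max_idPl lox) (min_idPl xhi). Qed.

End Clamp.

Lemma continuous_clamp (R : realType) (lo hi : R) : continuous (clamp lo hi).
Proof.
move=> x; apply: (@continuous_min _ _ (fun y => Num.max y lo) (cst hi)).
- by apply: (@continuous_max _ _ id (cst lo)); [exact: cvg_id|exact: cvg_cst].
- exact: cvg_cst.
Qed.

Section Lotteries.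
Variables (R : realType) (a b : R).
Hypothesis hab : a < b.

Lemma Iab_clamp (x : R) : Iab a b (clamp a b x).
Proof. by rewrite /Iab /= in_itv /= clamp_itv // ltW. Qed.

Lemma clamp_Iab (x : R) : Iab a b x -> clamp a b x = x.
Proof. by rewrite /Iab /= in_itv /=; exact: clamp_id. Qed.

Lemma Iab_left : Iab a b a.
Proof. by rewrite /Iab /= in_itv /= lexx ltW. Qed.

Lemma Iab_right : Iab a b b.
Proof. by rewrite /Iab /= in_itv /= lexx ltW. Qed.

Lemma Iab_ge (x : R) : Iab a b x -> a <= x.
Proof. by rewrite /Iab /= in_itv /= => /andP[]. Qed.

Lemma Iab_le (x : R) : Iab a b x -> x <= b.
Proof. by rewrite /Iab /= in_itv /= => /andP[]. Qed.

Lemma dirac_clamp_Iab (x : R) : (\d_(clamp a b x) : set R -> \bar R) (Iab a b) = 1%E.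
Proof. by rewrite diracE mem_set //; exact: Iab_clamp. Qed.

(* Clamping makes point masses and mixtures total in their real parameter. *)
Definition dirac_lott (x : R) : Lott a b :=
  exist _ (\d_(clamp a b x) : probability R R) (dirac_clamp_Iab x).

Lemma integ_dirac_lott (x : R) (h : R -> R) : {within Iab a b, continuous h} ->
  integ a b (sval (dirac_lott x)) h = h (clamp a b x).
Proof.
move=> hc; rewrite /integ /=.
rewrite (integral_dirac _ (measurable_Iab a b) (within_continuous_measurable hc)).
by rewrite diracE mem_set ?mul1e //; exact: Iab_clamp.
Qed.

Let weight (t : R) := clamp 0 1 t.

Let weight_ge0 (t : R) : 0 <= weight t.
Proof. by have /andP[] := clamp_itv t (@ler01 R). Qed.

Let weight_le1 (t : R) : 0 <= 1 - weight t.
Proof. by have /andP[_] := clamp_itv t (@ler01 R); rewrite subr_ge0. Qed.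

Definition mix_measure (t : R) : set R -> \bar R :=
  measure_add (mscale (NngNum (weight_ge0 t)) \d_b)
              (mscale (NngNum (weight_le1 t)) \d_a).

HB.instance Definition _ t := Measure.copy (mix_measure t)
  (measure_add (mscale (NngNum (weight_ge0 t)) \d_b)
               (mscale (NngNum (weight_le1 t)) \d_a)).

Lemma mix_measure_setT (t : R) : mix_measure t setT = 1%E.
Proof.
rewrite /mix_measure measure_addE /=; rewrite /mscale /= !diracT !mule1.
by rewrite -EFinD subrKC.
Qed.

HB.instance Definition _ t :=
  Measure_isProbability.Build _ _ _ (mix_measure t) (mix_measure_setT t).

Lemma mix_measure_Iab (t : R) : (mix_measure t : probability R R) (Iab a b) = 1%E.
Proof.
change (mix_measure t (Iab a b) = 1%E).
rewrite /mix_measure measure_addE /=; rewrite /mscale /= !diracE.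
by rewrite (mem_set Iab_left) (mem_set Iab_right) -!EFinM -EFinD !mulr1 subrKC.
Qed.

Definition mix_lott (t : R) : Lott a b :=
  exist _ (mix_measure t : probability R R) (mix_measure_Iab t).

Lemma integ_mix_lott (t : R) (h : R -> R) : {within Iab a b, continuous h} ->
  (forall x, Iab a b x -> 0 <= h x) -> 0 <= t <= 1 ->
  integ a b (sval (mix_lott t)) h = t * h b + (1 - t) * h a.
Proof.
move=> hc h0 t01; rewrite /integ /= /mix_measure.
have mh := within_continuous_measurable hc.
have h0' x : Iab a b x -> (0 <= (EFin \o h) x)%E by move/h0; rewrite lee_fin.
rewrite (ge0_integral_measure_add _ _ (measurable_Iab a b) h0' mh).
rewrite !(ge0_integral_mscale _ (measurable_Iab a b) _ mh h0').
rewrite !(integral_dirac _ (measurable_Iab a b) mh) !diracE.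
by rewrite (mem_set Iab_left) (mem_set Iab_right) /= !mul1r /weight clamp_id.
Qed.

End Lotteries.

Lemma continuous_ptws {X : topologicalType} {I : Type} {T : topologicalType}
    (f : X -> {ptws I -> T}) :
  (forall i, continuous (fun x => f x i)) -> continuous f.
Proof. by move=> fc x; apply/cvg_sup => i; exact: continuous_comp_initial (fc i) x. Qed.

Lemma continuous_comp_within {X Y Z : topologicalType} (A : set Y)
    (h : Y -> Z) (c : X -> Y) :
  {within A, continuous h} -> continuous c -> (forall x, A (c x)) ->
  continuous (h \o c).
Proof.
move=> hc cc cA x; apply: cvg_comp _ ((subspace_continuousP _ _).1 hc _ (cA x)).
move=> U /(cc x); rewrite !nbhs_simpl /=; apply: filterS => z.
by apply; exact: cA.
Qed.

Section StandardRepresentations.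
Variables (R : realType) (a b : R).
Hypothesis hab : a < b.
Variable S : finType.

Definition dirac_act (x : R) : Act a b S := const_act (dirac_lott hab x).

Lemma continuous_dirac_act : continuous dirac_act.
Proof.
apply: continuous_ptws => s; apply: continuous_comp_initial.
apply: continuous_ptws => h; have hc := svalP h.
have -> : (evl (b:=b) \o dirac_act^~ s)^~ h = sval h \o clamp a b.
  by apply/funext => x; rewrite /= /evl integ_dirac_lott.
apply: continuous_comp_within hc (@continuous_clamp _ _ _) _.
exact: Iab_clamp.
Qed.

Lemma fosd_dirac_left (p : Lott a b) : fosd p (dirac_lott hab a).
Proof.
move=> h hc hmono; rewrite integ_dirac_lott // clamp_Iab; last exact: Iab_left.
rewrite -[X in X <= _](@integ_cst _ a b _ (h a) (svalP p)).
apply: le_integ => //; first exact/continuous_subspaceT/cst_continuous.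
by move=> y Iy; apply: hmono; rewrite ?inE //; [exact: Iab_left|exact: Iab_ge Iy].
Qed.

Lemma fosd_dirac_right (p : Lott a b) : fosd (dirac_lott hab b) p.
Proof.
move=> h hc hmono; rewrite integ_dirac_lott // clamp_Iab; last exact: Iab_right.
rewrite -[X in _ <= X](@integ_cst _ a b _ (h b) (svalP p)).
apply: le_integ => //; first exact/continuous_subspaceT/cst_continuous.
by move=> y Iy; apply: hmono; rewrite ?inE //; [exact: Iab_right|exact: Iab_le Iy].
Qed.

Lemma in_U_ge0 (u : R -> R) : in_U a b u -> forall x, Iab a b x -> 0 <= u x.
Proof.
move=> [_ [hmono [ua _]]] x Ix; rewrite -ua.
by apply: hmono; rewrite ?inE //; [exact: Iab_left|exact: Iab_ge Ix].
Qed.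

Variables (V : Act a b S -> R) (u : R -> R).
Hypothesis hV : standard_rep V u.

Lemma standard_rep_dirac (x : R) : Iab a b x -> V (dirac_act x) = u x.
Proof.
have [_ [[uc _] Vconst]] := hV.
by move=> Ix; rewrite /dirac_act Vconst integ_dirac_lott // clamp_Iab.
Qed.

Lemma standard_rep_mix (t : R) : 0 <= t <= 1 ->
  V (const_act (mix_lott hab t)) = t.
Proof.
have [_ [hu Vconst]] := hV; have [uc [_ [ua ub]]] := hu.
move=> t01; rewrite Vconst integ_mix_lott // ?ua ?ub ?mulr1 ?mulr0 ?addr0 //.
exact: in_U_ge0.
Qed.

Lemma standard_rep_bounds (pr : Act a b S -> Act a b S -> Prop) :
  represents pr V -> weakly_monotone pr -> forall f, 0 <= V f <= 1.
Proof.
have [_ [[_ [_ [ua ub]]] _]] := hV.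
move=> Vpr prmono f; apply/andP; split.
- rewrite -ua -standard_rep_dirac; last exact: Iab_left.
  by apply/Vpr/prmono => s; exact: fosd_dirac_left.
- rewrite -ub -standard_rep_dirac; last exact: Iab_right.
  by apply/Vpr/prmono => s; exact: fosd_dirac_right.
Qed.

End StandardRepresentations.

Lemma not_Ls (R : realType) (a b : R) (S : finType)
    (F : nat -> set (Act a b S * Act a b S)) (z : Act a b S * Act a b S) :
  ~ Ls F z -> \forall w \near z & n \near \oo, ~ F n w.
Proof.
move=> nLs; have [U [zU [N nFU]]] : exists U, nbhs z U /\
    exists N, forall n, (N <= n)%N -> ~ ((F n `&` U) !=set0).
  apply: contrapT => hLs; apply: nLs => U zU N; apply: contrapT => nF.
  by apply: hLs; exists U; split => //; exists N => n Nn FU; apply: nF; exists n.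
exists (U, [set n | (N <= n)%N]) => [|[w n] /= [Uw Nn] Fw].
  by split => //; exists N.
by apply: (nFU n Nn); exists w.
Qed.

Lemma near_pair_fst {T U : topologicalType} {I : Type} (F : set_system I)
    (x : T) (y : U) (P : T * U -> I -> Prop) :
  (\forall w \near (x, y) & i \near F, P w i) ->
  \forall x' \near x & i \near F, P (x', y) i.
Proof.
move=> [[W G] /= [[[A B] /= [xA yB] sAB] FG] sub].
exists (A, G) => [//|[x' i] /= [Ax' Gi]]; apply: (sub ((x', y), i)); split => //.
by apply: sAB; split => //; exact: nbhs_singleton.
Qed.

Lemma near_pair_snd {T U : topologicalType} {I : Type} (F : set_system I)
    (x : T) (y : U) (P : T * U -> I -> Prop) :
  (\forall w \near (x, y) & i \near F, P w i) ->
  \forall y' \near y & i \near F, P (x, y') i.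
Proof.
move=> [[W G] /= [[[A B] /= [xA yB] sAB] FG] sub].
exists (B, G) => [//|[y' i] /= [By' Gi]]; apply: (sub ((x, y'), i)); split => //.
by apply: sAB; split => //; exact: nbhs_singleton.
Qed.

Section Convergence.
Variables (R : realType) (a b : R).
Hypothesis hab : a < b.
Variable S : finType.
Local Notation X := (Act a b S).
Variables (pstar : X -> X -> Prop) (prefs : nat -> X -> X -> Prop).
Variables (V : X -> R) (u : R -> R) (Vs : nat -> X -> R) (us : nat -> R -> R).
Hypothesis Ls_prefs : forall z, Ls (fun k => graph (prefs k)) z -> graph pstar z.
Hypothesis pstar_mono : weakly_monotone pstar.
Hypothesis hV : standard_rep V u.
Hypothesis V_pstar : represents pstar V.
Hypothesis hVs : forall k, standard_rep (Vs k) (us k) /\ represents (prefs k) (Vs k).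
Hypothesis prefs_mono : forall k, weakly_monotone (prefs k).

Lemma eventually_Vs_lt (p q : X) : V p < V q ->
  \forall w \near (p, q) & n \near \oo, Vs n w.1 < Vs n w.2.
Proof.
move=> Vpq; have : ~ Ls (fun k => graph (prefs k)) (p, q).
  by move/Ls_prefs/V_pstar; rewrite leNgt Vpq.
move/not_Ls; apply: filterS => -[w n] /= nprefs.
by rewrite ltNge; apply/negP => /(hVs n).2.
Qed.

Lemma V_bounds (f : X) : 0 <= V f <= 1.
Proof. exact (standard_rep_bounds hab hV V_pstar pstar_mono f). Qed.

Lemma Vs_bounds (n : nat) (f : X) : 0 <= Vs n f <= 1.
Proof. exact (standard_rep_bounds hab (hVs n).1 (hVs n).2 (prefs_mono n) f). Qed.

Lemma eventually_Vs_lt_upper (x : X) (eps : R) : 0 < eps ->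
  \forall y \near x & n \near \oo, Vs n y < V x + eps.
Proof.
move=> e0; have /andP[V0 V1] := V_bounds x.
have [gt1|le1] := ltrP 1 (V x + eps).
  by apply: filterE => -[y n] /=; have /andP[_ Vs1] := Vs_bounds n y; lra.
pose m : X := const_act (mix_lott hab (V x + eps)).
have t01 : 0 <= V x + eps <= 1 by apply/andP; split => //; lra.
have /eventually_Vs_lt/near_pair_fst : V x < V m.
  by rewrite (standard_rep_mix hab hV t01) ltrDl.
apply: filterS => -[y n] /=.
by rewrite (standard_rep_mix hab (hVs n).1 t01).
Qed.

Lemma eventually_Vs_gt_lower (x : X) (eps : R) : 0 < eps ->
  \forall y \near x & n \near \oo, V x - eps < Vs n y.
Proof.
move=> e0; have /andP[V0 V1] := V_bounds x.
have [lt0|ge0] := ltrP (V x - eps) 0.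
  by apply: filterE => -[y n] /=; have /andP[Vs0 _] := Vs_bounds n y; lra.
pose m : X := const_act (mix_lott hab (V x - eps)).
have t01 : 0 <= V x - eps <= 1 by apply/andP; split => //; lra.
have /eventually_Vs_lt/near_pair_snd : V m < V x.
  by rewrite (standard_rep_mix hab hV t01) ltrBlDr ltrDl.
apply: filterS => -[y n] /=.
by rewrite (standard_rep_mix hab (hVs n).1 t01).
Qed.

Lemma eventually_Vs_near (x : X) (eps : R) : 0 < eps ->
  \forall y \near x & n \near \oo, `|Vs n y - V y| < eps.
Proof.
move=> e0; have e2 : 0 < eps / 2 by rewrite divr_gt0.
have /(filter_prod1 (G := \oo)) Vnear : \forall y \near x, `|V x - V y| < eps / 2.
  by have [Vcont _] := hV; exact: (cvgrPdist_lt V (V x)).1 (Vcont x) _ e2.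
apply: filterS3 (eventually_Vs_lt_upper x e2) (eventually_Vs_gt_lower x e2) Vnear.
move=> [y n] /= upper lower; rewrite !ltr_norml => /andP[? ?].
by apply/andP; split; lra.
Qed.

Lemma cvg_Vs_compact (K : set X) : compact K -> forall eps : R, 0 < eps ->
  \forall k \near \oo, forall x, K x -> `|Vs k x - V x| < eps.
Proof.
move=> cK eps e0.
have := (compact_near_coveringP K).1 cK nat \oo (fun n y => `|Vs n y - V y| < eps) _.
by apply => x _; exact: eventually_Vs_near.
Qed.

End Convergence.

Theorem mainTheorem8 (R : realType) (a b : R) (hab : a < b) (S : finType)
  (hS : [set: S] !=set0)
  (B : nat -> Act a b S * Act a b S)
  (hB : seq_experiments B) (hrec : recovers B)
  (pstar : Act a b S -> Act a b S -> Prop)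
  (prefs : nat -> Act a b S -> Act a b S -> Prop)
  (hstar : is_preference pstar) (hstar_wm : weakly_monotone pstar)
  (hk : forall k, is_preference (prefs k) /\ weakly_monotone (prefs k) /\
          strongly_rationalizes (prefs k) B k (cset pstar))
  (V : Act a b S -> R) (u : R -> R)
  (hV : standard_rep V u) (hVrep : represents pstar V)
  (Vs : nat -> Act a b S -> R) (us : nat -> R -> R)
  (hVs : forall k, standard_rep (Vs k) (us k) /\ represents (prefs k) (Vs k)) :
  (forall K : set (Act a b S), compact K ->
     forall eps : R, 0 < eps ->
       \forall k \near \oo, forall x, K x -> `|Vs k x - V x| < eps) /\
  (forall eps : R, 0 < eps ->
     \forall k \near \oo, forall x, Iab a b x -> `|us k x - u x| < eps).
Proof.
have Ls_prefs z : Ls (fun k => graph (prefs k)) z -> graph pstar z.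
  by rewrite (hrec pstar hstar hstar_wm prefs hk).2.
have prefs_mono k : weakly_monotone (prefs k) by have [_ []] := hk k.
have cvgV := cvg_Vs_compact hab Ls_prefs hstar_wm hV hVrep hVs prefs_mono.
split => // eps e0.
have cK : compact (dirac_act hab (S := S) @` Iab a b).
  apply: continuous_compact (@segment_compact _ a b).
  exact/continuous_subspaceT/continuous_dirac_act.
apply: filterS (cvgV _ cK eps e0) => k close x Ix.
rewrite -(standard_rep_dirac hab (hVs k).1 Ix) -(standard_rep_dirac hab hV Ix).
by apply: close; exists x.
Qed.
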